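(* Let $p>q\geq1$ be coprime integers such that $B_{p,q}$ smoothly embeds in a smooth closed oriented $4$-manifold homotopy equivalent to $\mathbb{CP}^2$, let $a_1,\dots,a_n\geq2$ be given by the Hirzebruch–Jung continued fraction $\frac{p^2}{pq-1}=a_1-\cfrac{1}{a_2-\cfrac{1}{\cdots-\cfrac{1}{a_n}}}$, and suppose $n\geq 2$. Define $d_1=1$, $d_2=a_1d_1$, $d_s=a_{s-1}d_{s-1}-d_{s-2}$ for $s=3,\dots,n$. Then \[\sum_{i=1}^n(2-a_i)d_i=-pq.\]
   Context: For coprime integers $p>q\geq1$, $B_{p,q}$ denotes the Stein rational homology $4$-ball arising as the rational homology ball smoothing of the cyclic quotient surface singularity of type $\frac{1}{p^2}(pq-1,1)$. *)

From mathcomp Require Import all_boot all_order all_algebra.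
Set Implicit Arguments. Unset Strict Implicit. Unset Printing Implicit Defensive.
Import Order.TTheory GRing.Theory Num.Theory.
Local Open Scope ring_scope.

Fixpoint hjfrac (s : seq nat) : rat :=
  match s with
  | [::] => 0
  | [:: x] => x%:R
  | x :: t => x%:R - (hjfrac t)^-1
  end.

(* d_1 = 1, d_2 = a_1 d_1, d_s = a_{s-1} d_{s-1} - d_{s-2} (s >= 3),
   with a given 1-based: a i = a_i.
   hjd_pair a k = (d_{k+1}, d_{k+2}); hjd a s = d_s for s >= 1. *)
Fixpoint hjd_pair (a : nat -> int) (k : nat) : int * int :=
  match k with
  | 0 => (1, a 1%N * 1)
  | k'.+1 => let: (x, y) := hjd_pair a k' in (y, a k'.+2 * y - x)
  end.

Definition hjd (a : nat -> int) (s : nat) : int := (hjd_pair a s.-1).1.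

From mathcomp Require Import all_boot all_order all_algebra.
From mathcomp Require Import zify ring lra.
Set Implicit Arguments. Unset Strict Implicit. Unset Printing Implicit Defensive.
Import Order.TTheory GRing.Theory Num.Theory.
Local Open Scope ring_scope.

(* With d_0 = 0 the recurrence reads d_{s+1} = a_s d_s - d_{s-1} for s >= 1, so
   the sum telescopes to 1 + d_n - d_{n+1}.  The pair (d_n, d_{n+1}) is the
   image of (0, 1) under the steps (u, v) |-> (v, a_s v - u), which preserve
   2x2 determinants: d_{n+1} is the numerator of [a_1, ..., a_n], its
   denominator e satisfies d_n e = 1 (mod d_{n+1}), and 0 <= d_n < d_{n+1}
   because every a_s >= 2.  As q^2 p^2 - (pq + 1)(pq - 1) = 1, the fraction
   p^2 / (pq - 1) is already reduced, so d_{n+1} = p^2, e = pq - 1, d_n = -(pq + 1) (mod p^2), hence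
   d_n = p^2 - pq - 1 and the sum is -pq. *)

Definition hj_step (x : int) (w : int * int) : int * int := (w.2, x * w.2 - w.1).

Definition hj_cont (s : seq nat) (w : int * int) : int * int :=
  foldl (fun w x => hj_step x%:Z w) w s.

Definition hj_num (s : seq nat) : int := (hj_cont s (0, 1)).2.
Definition hj_pen (s : seq nat) : int := (hj_cont s (0, 1)).1.
Definition hj_den (s : seq nat) : int := (hj_cont s (-1, 0)).2.

Definition lincomb (c d : int) (w w' : int * int) : int * int :=
  (c * w.1 + d * w'.1, c * w.2 + d * w'.2).

Definition det2 (w w' : int * int) : int := w.1 * w'.2 - w.2 * w'.1.

Section Recurrence.

Variable a : nat -> int.

Lemma hjd_pair_succ_fst k : (hjd_pair a k.+1).1 = (hjd_pair a k).2.
Proof. by rewrite /=; case: (hjd_pair a k). Qed.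

Lemma hjdSS s : (0 < s)%N -> hjd a s.+2 = a s.+1 * hjd a s.+1 - hjd a s.
Proof.
case: s => // s _; rewrite /hjd /= hjd_pair_succ_fst /=.
by case: (hjd_pair a s).
Qed.

Lemma sum_hjd_telescope n : (0 < n)%N ->
  \sum_(1 <= i < n.+1) (2 - a i) * hjd a i = 1 + hjd a n - hjd a n.+1.
Proof.
elim: n => // -[_ _ | n IH _].
  by rewrite big_nat1 /hjd /=; ring.
by rewrite big_nat_recr //= IH // (@hjdSS n.+1) //; ring.
Qed.

End Recurrence.

Lemma hjd_pair_take s k : (k < size s)%N ->
  hjd_pair (fun j => (nth 0%N s j.-1)%:Z) k = hj_cont (take k.+1 s) (0, 1).
Proof.
elim: k => [|k IH] lt_ks.
  by case: s lt_ks => // x s _; rewrite /= take0 /hj_cont /hj_step /= subr0.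
by rewrite /= IH 1?ltnW // (take_nth 0%N lt_ks) /hj_cont foldl_rcons; case: foldl.
Qed.

Lemma hjd_size s : s != [::] ->
  hjd (fun j => (nth 0%N s j.-1)%:Z) (size s) = hj_pen s /\
  hjd (fun j => (nth 0%N s j.-1)%:Z) (size s).+1 = hj_num s.
Proof.
case: s => // x t _; rewrite /hjd /= hjd_pair_succ_fst hjd_pair_take //.
by rewrite -/(size (x :: t)) take_size.
Qed.

Lemma hj_cont_lincomb s c d w w' :
  hj_cont s (lincomb c d w w') = lincomb c d (hj_cont s w) (hj_cont s w').
Proof.
elim: s w w' => // x s IH w w' /=.
rewrite -IH; congr hj_cont; rewrite /hj_step /lincomb /=; congr pair; ring.
Qed.

Lemma hj_cont_det s w w' : det2 (hj_cont s w) (hj_cont s w') = det2 w w'.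
Proof. by elim: s w w' => // x s IH w w' /=; rewrite IH /det2 /=; ring. Qed.

Lemma hj_cont_increasing s w : all (fun x => 2 <= x)%N s ->
  0 <= w.1 < w.2 -> 0 <= (hj_cont s w).1 < (hj_cont s w).2.
Proof.
elim: s w => // x s IH w /= /andP[x_ge2 s_ge2] /andP[w1_ge0 w12].
apply: IH => //=; have : 2 <= x%:Z by lia.
nia.
Qed.

Lemma hj_num_gt0 s : all (fun x => 2 <= x)%N s -> 0 < hj_num s.
Proof.
move=> s_ge2; case/andP: (hj_cont_increasing (w := (0, 1)) s_ge2 isT).
exact: le_lt_trans.
Qed.

Lemma hj_den_cons x t : hj_den (x :: t) = hj_num t.
Proof. by rewrite /hj_den /= /hj_step /= mulr0 sub0r opprK. Qed.

Lemma hj_num_cons x t : hj_num (x :: t) = x%:Z * hj_num t - hj_den t.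
Proof.
rewrite /hj_num /hj_den /=.
have -> : hj_step x (0, 1) = lincomb x (-1) (0, 1) (-1, 0).
  by rewrite /hj_step /lincomb /=; congr pair; ring.
by rewrite hj_cont_lincomb /= mulN1r.
Qed.

Lemma hjfrac_cont s : s != [::] -> all (fun x => 2 <= x)%N s ->
  hjfrac s = (hj_num s)%:~R / (hj_den s)%:~R.
Proof.
elim: s => // x [_ _ _ | y t IH _ /andP[_ t_ge2]].
  by rewrite hj_den_cons hj_num_cons /hj_num /hj_den /= mulr1 subr0 divr1.
rewrite [LHS]/= -/(hjfrac (y :: t)) IH //; set u := y :: t.
have num_neq0 : (hj_num u)%:~R != 0 :> rat by rewrite intr_eq0 gt_eqF ?hj_num_gt0.
rewrite (hj_den_cons x) (hj_num_cons x) invf_div rmorphB rmorphM /= -pmulrn.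
by field.
Qed.

Lemma hj_den_gt0 s : s != [::] -> all (fun x => 2 <= x)%N s -> 0 < hj_den s.
Proof. by case: s => // x t _ /andP[_ t_ge2]; rewrite hj_den_cons hj_num_gt0. Qed.

Lemma hj_det s : hj_pen s * hj_den s - hj_num s * (hj_cont s (-1, 0)).1 = 1.
Proof.
have := hj_cont_det s (0, 1) (-1, 0).
by rewrite /det2 /= mulr0 sub0r mulrN1 opprK.
Qed.

Lemma hj_coprime s : coprimez (hj_num s) (hj_den s).
Proof.
apply/coprimezP; exists (- (hj_cont s (-1, 0)).1, hj_pen s) => /=.
by rewrite -[RHS](hj_det s); ring.
Qed.

Lemma eq_coprime_frac (n d n' d' : int) :
  coprimez n d -> coprimez n' d' -> 0 < d -> 0 < d' ->
  n%:~R / d%:~R = n'%:~R / d'%:~R :> rat -> n = n' /\ d = d'.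
Proof.
move=> cop cop' d_gt0 d'_gt0 eq_frac; split.
  have := coprimeq_num cop.
  by rewrite eq_frac coprimeq_num // !gtr0_sg // !mul1r.
have := coprimeq_den cop.
by rewrite eq_frac coprimeq_den // !gt_eqF // !gtr0_norm.
Qed.

Lemma residue_unique (m x y : int) :
  (m %| x - y)%Z -> 0 <= x < m -> 0 <= y < m -> x = y.
Proof.
case/dvdzP => k eq_xy /andP[x_ge0 x_lt] /andP[y_ge0 y_lt].
have k_eq0 : k = 0 by nia.
by move: eq_xy; rewrite k_eq0 mul0r; lia.
Qed.

Lemma hj_pen_unique s D : all (fun x => 2 <= x)%N s ->
  (hj_num s %| D * hj_den s - 1)%Z -> 0 <= D < hj_num s -> hj_pen s = D.
Proof.
move=> s_ge2 num_dvd D_bounds; apply: residue_unique D_bounds; last first.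
  exact: (hj_cont_increasing (w := (0, 1)) s_ge2 isT).
rewrite -(Gauss_dvdzl _ (hj_coprime s)).
have -> : (hj_pen s - D) * hj_den s
          = hj_num s * (hj_cont s (-1, 0)).1 - (D * hj_den s - 1).
  by rewrite -[X in _ - (_ - X)](hj_det s); ring.
by rewrite rpredB ?dvdz_mulr ?dvdzz.
Qed.

Theorem lemma3p3 (p q : nat) (a : seq nat) :
  (1 <= q < p)%N -> coprime p q ->
  all (fun x => 2 <= x)%N a ->
  (2 <= size a)%N ->
  hjfrac a = ((p ^ 2)%:R / (p * q - 1)%:R : rat) ->
  \sum_(1 <= i < (size a).+1)
      (2 - (nth 0%N a i.-1)%:Z) * hjd (fun j => (nth 0%N a j.-1)%:Z) i
    = - (p * q)%:Z.
Proof.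
move=> /andP[q_ge1 q_lt_p] _ a_ge2 size_a frac_a.
have a_neq0 : a != [::] by case: a size_a {frac_a a_ge2}.
set P : int := p%:Z ^+ 2; set Q : int := p%:Z * q%:Z - 1.
have Q_gt0 : 0 < Q by rewrite /Q; nia.
have cop_PQ : coprimez P Q.
  apply/coprimezP; exists (q%:Z ^+ 2, - (p%:Z * q%:Z + 1)).
  by rewrite /P /Q /=; ring.
have frac_PQ : hjfrac a = P%:~R / Q%:~R.
  have pq_ge1 : (1 <= p * q)%N by rewrite muln_gt0; lia.
  by rewrite frac_a natrX natrB // natrM rmorphXn rmorphB rmorphM /= -!pmulrn.
rewrite hjfrac_cont // in frac_PQ.
have [num_a den_a] :=
  eq_coprime_frac (hj_coprime a) cop_PQ (hj_den_gt0 a_neq0 a_ge2) Q_gt0 frac_PQ.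
have pen_a : hj_pen a = P - p%:Z * q%:Z - 1.
  apply: hj_pen_unique; rewrite ?num_a ?den_a //.
    by apply/dvdzP; exists (Q - q%:Z ^+ 2); rewrite /P /Q; ring.
  by rewrite /P; apply/andP; split; nia.
have [d_n d_n1] := hjd_size a_neq0.
by rewrite sum_hjd_telescope ?d_n ?d_n1 ?pen_a ?num_a ?PoszM /P; [ring | lia].
Qed.
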